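(* Let $T=(\{T_g\}_{g\in G},\{\gamma_{g,h}\}_{g,h\in G},u)$ and $T'=(\{T'_g\}_{g\in G},\{\gamma'_{g,h}\}_{g,h\in G},u')$ be partial actions of a group $G$ on semigroupal categories $\mathcal{C}$ and $\mathcal{C}'$ respectively, and let $(F,\{\tau_g\}_{g\in G})\colon T\to T'$ be a morphism of partial actions. Then for every object $X$ of $\mathcal{C}$, $$(\tau_e)_X\circ F(u_X)=u'_{F(X)}.$$
   Context: Semigroupal categories are (strict) categories with a tensor functor and associator satisfying the pentagon axiom; an ideal is a subcategory closed under isomorphisms and under tensoring on either side by arbitrary objects. A partial action of $G$ (unit $e$) on a semigroupal category $\mathcal{C}$ is a triple $(\{T_g\},\{\gamma_{g,h}\},u)$ together with ideals $\mathcal{C}_g$ of $\mathcal{C}$ such that: (1) $(T_g,J^g)\colon\mathcal{C}_{g^{-1}}\to\mathcal{C}_g$ is a semigroupal equivalence ($J^g\colon T_g(-)\otimes T_g(-)\Rightarrow T_g(-\otimes-)$ a natural isomorphism satisfying the hexagon axiom); (2) $\mathcal{C}_e=\mathcal{C}$ and $u\colon\mathrm{Id}_{\mathcal{C}}\Rightarrow T_e$ is a natural isomorphism of semigroupal functors, i.e. $J^e_{X,Y}\circ(u_X\otimes u_Y)=u_{X\otimes Y}$; (3) the restriction of $T_g$ to $\mathcal{C}_{g^{-1}}\cap\mathcal{C}_h$ is a semigroupal equivalence onto $\mathcal{C}_g\cap\mathcal{C}_{gh}$; (4) $\gamma_{g,h}\colon T_gT_h\Rightarrow T_{gh}$ is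 a natural isomorphism of functors $\mathcal{C}_{h^{-1}}\cap\mathcal{C}_{h^{-1}g^{-1}}\to\mathcal{C}_g\cap\mathcal{C}_{gh}$ with $J^{gh}_{X,Y}\circ((\gamma_{g,h})_X\otimes(\gamma_{g,h})_Y)=(\gamma_{g,h})_{X\otimes Y}\circ T_g(J^h_{X,Y})\circ J^g_{T_h(X),T_h(Y)}$; and moreover $(\gamma_{gh,k})_X\circ(\gamma_{g,h})_{T_k(X)}=(\gamma_{g,hk})_X\circ T_g((\gamma_{h,k})_X)$ for $X\in\mathcal{C}_{k^{-1}}\cap\mathcal{C}_{k^{-1}h^{-1}}\cap\mathcal{C}_{k^{-1}h^{-1}g^{-1}}$, and for $X\in\mathcal{C}_{g^{-1}}$ the morphisms $u_{T_g(X)}$ and $(\gamma_{e,g})_X$ are mutually inverse, as are $T_g(u_X)$ and $(\gamma_{g,e})_X$. A morphism of partial actions $(F,\{\tau_g\})\colon T\to T'$ consists of a semigroupal functor $F\colon\mathcal{C}\to\mathcal{C}'$ and, for each $g\in G$, a natural isomorphism $\tau_g\colon FT_g\Rightarrow T'_gF$ of functors from $\mathcal{C}_{g^{-1}}$ to $\mathcal{C}'_g$, such that $(\tau_{gh})_X\circ F((\gamma_{g,h})_X)=(\gamma'_{g,h})_{F(X)}\circ T'_g((\tau_h)_X)\circ(\tau_g)_{T_h(X)}$ for all $X\in\mathcal{C}_{h^{-1}}\cap\mathcal{C}_{(gh)^{-1}}$. *)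

Set Implicit Arguments.
Unset Strict Implicit.

Record Group := {
  gcar :> Type;
  gmul : gcar -> gcar -> gcar;
  ginv : gcar -> gcar;
  gunit : gcar;
  gmulA : forall a b c, gmul a (gmul b c) = gmul (gmul a b) c;
  gmul1l : forall a, gmul gunit a = a;
  gmul1r : forall a, gmul a gunit = a;
  gmulVl : forall a, gmul (ginv a) a = gunit;
  gmulVr : forall a, gmul a (ginv a) = gunit }.
Arguments gmul {g}.
Arguments ginv {g}.
Arguments gunit {g}.

Record Cat := {
  ob :> Type;
  hom : ob -> ob -> Type;
  idm : forall A, hom A A;
  cmp : forall A B C, hom B C -> hom A B -> hom A C;
  cmp_idl : forall A B (f : hom A B), cmp (idm B) f = f;
  cmp_idr : forall A B (f : hom A B), cmp f (idm A) = f;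
  cmp_assoc : forall A B C D (f : hom A B) (g : hom B C) (h : hom C D),
      cmp h (cmp g f) = cmp (cmp h g) f }.
Arguments hom {c}.
Arguments idm {c}.
Arguments cmp {c A B C}.

Definition is_iso (C : Cat) (A B : C) (f : hom A B) : Prop :=
  exists g : hom B A, cmp g f = idm A /\ cmp f g = idm B.

Record SgCat := {
  sg_cat :> Cat;
  tens : sg_cat -> sg_cat -> sg_cat;
  tensm : forall A A' B B', hom A A' -> hom B B' -> hom (tens A B) (tens A' B');
  tensm_id : forall A B, tensm (idm A) (idm B) = idm (tens A B);
  tensm_cmp : forall A A' A'' B B' B'' (f : hom A A') (f' : hom A' A'')
      (g : hom B B') (g' : hom B' B''),
      tensm (cmp f' f) (cmp g' g) = cmp (tensm f' g') (tensm f g);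
  assoc : forall X Y Z, hom (tens (tens X Y) Z) (tens X (tens Y Z));
  assoc_iso : forall X Y Z, is_iso (assoc X Y Z);
  assoc_nat : forall X X' Y Y' Z Z' (f : hom X X') (g : hom Y Y') (h : hom Z Z'),
      cmp (assoc X' Y' Z') (tensm (tensm f g) h)
      = cmp (tensm f (tensm g h)) (assoc X Y Z);
  pentagon : forall W X Y Z,
      cmp (assoc W X (tens Y Z)) (assoc (tens W X) Y Z)
      = cmp (tensm (idm W) (assoc X Y Z))
            (cmp (assoc W (tens X Y) Z) (tensm (assoc W X Y) (idm Z))) }.
Arguments tens {s}.
Arguments tensm {s A A' B B'}.
Arguments assoc {s}.

(* An ideal: a (full, replete) subcategory, given by a predicate on
   objects, closed under isomorphisms and under tensoring on either side
   by arbitrary objects. *)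
Record is_ideal (C : SgCat) (P : C -> Prop) : Prop := {
  ideal_iso : forall X Y (f : hom X Y), is_iso f -> P X -> P Y;
  ideal_tens_l : forall X Y, P Y -> P (tens X Y);
  ideal_tens_r : forall X Y, P X -> P (tens X Y) }.

(* Functors defined on the full subcategory cut out by P.  The object  *)
(* map is total (its values outside P are irrelevant); the morphism    *)
(* map takes membership proofs of source and target.                   *)
Record PFun (C D : Cat) (P : C -> Prop) := {
  pf_ob :> C -> D;
  pf_hom : forall X Y, P X -> P Y -> hom X Y -> hom (pf_ob X) (pf_ob Y);
  pf_id : forall X (pX : P X), pf_hom pX pX (idm X) = idm (pf_ob X);
  pf_cmp : forall X Y Z (pX : P X) (pY : P Y) (pZ : P Z)
      (f : hom X Y) (g : hom Y Z),
      pf_hom pX pZ (cmp g f) = cmp (pf_hom pY pZ g) (pf_hom pX pY f) }.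
Arguments pf_hom {C D P} p {X Y}.

Definition is_equiv_onto (C : Cat) (P Q : C -> Prop) (Fo : C -> C)
    (Fh : forall X Y, P X -> P Y -> hom X Y -> hom (Fo X) (Fo Y)) : Prop :=
  (forall X, P X -> Q (Fo X)) /\
  exists (So : C -> C)
         (Sh : forall X Y, Q X -> Q Y -> hom X Y -> hom (So X) (So Y)),
    (forall X (qX : Q X), Sh X X qX qX (idm X) = idm (So X)) /\
    (forall X Y Z (qX : Q X) (qY : Q Y) (qZ : Q Z) (f : hom X Y) (g : hom Y Z),
        Sh X Z qX qZ (cmp g f) = cmp (Sh Y Z qY qZ g) (Sh X Y qX qY f)) /\
    (forall Y, Q Y -> P (So Y)) /\
    (exists eps : forall X, P X -> hom (So (Fo X)) X,
        (forall X (pX : P X), is_iso (eps X pX)) /\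
        (forall X Y (pX : P X) (pY : P Y) (qX : Q (Fo X)) (qY : Q (Fo Y))
                (f : hom X Y),
            cmp (eps Y pY) (Sh _ _ qX qY (Fh X Y pX pY f)) = cmp f (eps X pX))) /\
    (exists eta : forall Y, Q Y -> hom (Fo (So Y)) Y,
        (forall Y (qY : Q Y), is_iso (eta Y qY)) /\
        (forall X Y (qX : Q X) (qY : Q Y) (pX : P (So X)) (pY : P (So Y))
                (f : hom X Y),
            cmp (eta Y qY) (Fh _ _ pX pY (Sh X Y qX qY f)) = cmp f (eta X qX))).

Definition is_sg_functor_on (C D : SgCat) (P : C -> Prop) (Fo : C -> D)
    (Fh : forall X Y, P X -> P Y -> hom X Y -> hom (Fo X) (Fo Y))
    (J : forall X Y, P X -> P Y -> hom (tens (Fo X) (Fo Y)) (Fo (tens X Y)))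
    : Prop :=
  (forall X Y (pX : P X) (pY : P Y), is_iso (J X Y pX pY)) /\
  (forall X X' Y Y' (pX : P X) (pX' : P X') (pY : P Y) (pY' : P Y')
          (pXY : P (tens X Y)) (pXY' : P (tens X' Y'))
          (f : hom X X') (g : hom Y Y'),
      cmp (J X' Y' pX' pY') (tensm (Fh _ _ pX pX' f) (Fh _ _ pY pY' g))
      = cmp (Fh _ _ pXY pXY' (tensm f g)) (J X Y pX pY)) /\
  (forall X Y Z (pX : P X) (pY : P Y) (pZ : P Z)
          (pXY : P (tens X Y)) (pYZ : P (tens Y Z))
          (pXY_Z : P (tens (tens X Y) Z)) (pX_YZ : P (tens X (tens Y Z))),
      cmp (Fh _ _ pXY_Z pX_YZ (assoc X Y Z))
          (cmp (J (tens X Y) Z pXY pZ) (tensm (J X Y pX pY) (idm (Fo Z))))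
      = cmp (J X (tens Y Z) pX pYZ)
          (cmp (tensm (idm (Fo X)) (J Y Z pY pZ)) (assoc (Fo X) (Fo Y) (Fo Z)))).

Definition castT (C : Cat) (I : Type) (T : I -> C -> C) (Z X : C) (a b : I)
    (e : a = b) (f : hom Z (T a X)) : hom Z (T b X) :=
  eq_rect a (fun c => hom Z (T c X)) f b e.

Unset Implicit Arguments.
Record PartialAction (G : Group) (C : SgCat) := {
  pa_I : G -> C -> Prop;
  pa_T : forall g : G, @PFun C C (pa_I (ginv g));
  pa_J : forall (g : G) (X Y : C), pa_I (ginv g) X -> pa_I (ginv g) Y ->
           hom (tens (pa_T g X) (pa_T g Y)) (pa_T g (tens X Y));
  pa_gamma : forall (g h : G) (X : C),
           pa_I (ginv h) X -> pa_I (gmul (ginv h) (ginv g)) X ->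
           hom (pa_T g (pa_T h X)) (pa_T (gmul g h) X);
  pa_u : forall X : C, hom X (pa_T gunit X);

  pa_ideal : forall g, is_ideal (pa_I g);
  pa_T_sg : forall g, @is_sg_functor_on C C (pa_I (ginv g)) (pa_T g)
                        (fun X Y => @pf_hom C C _ (pa_T g) X Y) (pa_J g);
  pa_T_equiv : forall g, @is_equiv_onto C (pa_I (ginv g)) (pa_I g) (pa_T g)
                        (fun X Y => @pf_hom C C _ (pa_T g) X Y);
  pa_Ie : forall X, pa_I gunit X;
  pa_u_iso : forall X, is_iso (pa_u X);
  pa_u_nat : forall (X Y : C) (pX : pa_I (ginv gunit) X)
               (pY : pa_I (ginv gunit) Y) (f : hom X Y),
      cmp (pa_u Y) f = cmp (@pf_hom C C _ (pa_T gunit) X Y pX pY f) (pa_u X);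
  pa_u_sg : forall (X Y : C) (pX : pa_I (ginv gunit) X)
               (pY : pa_I (ginv gunit) Y),
      cmp (pa_J gunit X Y pX pY) (tensm (pa_u X) (pa_u Y)) = pa_u (tens X Y);
  (* (3) restriction of T_g to C_{g^-1} /\ C_h is a semigroupal equivalence
         onto C_g /\ C_{gh} (it is semigroupal with the restriction of J^g) *)
  pa_T_restr : forall g h,
      @is_equiv_onto C (fun X => pa_I (ginv g) X /\ pa_I h X)
                    (fun X => pa_I g X /\ pa_I (gmul g h) X)
                    (pa_T g)
                    (fun X Y pX pY f =>
                       @pf_hom C C _ (pa_T g) X Y (proj1 pX) (proj1 pY) f);
  pa_gamma_iso : forall g h X (p1 : pa_I (ginv h) X)
      (p2 : pa_I (gmul (ginv h) (ginv g)) X), is_iso (pa_gamma g h X p1 p2);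
  pa_gamma_nat : forall g h (X Y : C) (f : hom X Y)
      (p1X : pa_I (ginv h) X) (p2X : pa_I (gmul (ginv h) (ginv g)) X)
      (p1Y : pa_I (ginv h) Y) (p2Y : pa_I (gmul (ginv h) (ginv g)) Y)
      (qX : pa_I (ginv g) (pa_T h X)) (qY : pa_I (ginv g) (pa_T h Y))
      (rX : pa_I (ginv (gmul g h)) X) (rY : pa_I (ginv (gmul g h)) Y),
      cmp (pa_gamma g h Y p1Y p2Y)
          (@pf_hom C C _ (pa_T g) _ _ qX qY
             (@pf_hom C C _ (pa_T h) X Y p1X p1Y f))
      = cmp (@pf_hom C C _ (pa_T (gmul g h)) X Y rX rY f)
            (pa_gamma g h X p1X p2X);
  pa_gamma_sg : forall g h (X Y : C)
      (p1X : pa_I (ginv h) X) (p2X : pa_I (gmul (ginv h) (ginv g)) X)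
      (p1Y : pa_I (ginv h) Y) (p2Y : pa_I (gmul (ginv h) (ginv g)) Y)
      (p1XY : pa_I (ginv h) (tens X Y))
      (p2XY : pa_I (gmul (ginv h) (ginv g)) (tens X Y))
      (rX : pa_I (ginv (gmul g h)) X) (rY : pa_I (ginv (gmul g h)) Y)
      (qX : pa_I (ginv g) (pa_T h X)) (qY : pa_I (ginv g) (pa_T h Y))
      (qXY : pa_I (ginv g) (tens (pa_T h X) (pa_T h Y)))
      (qXY' : pa_I (ginv g) (pa_T h (tens X Y))),
      cmp (pa_J (gmul g h) X Y rX rY)
          (tensm (pa_gamma g h X p1X p2X) (pa_gamma g h Y p1Y p2Y))
      = cmp (pa_gamma g h (tens X Y) p1XY p2XY)
            (cmp (@pf_hom C C _ (pa_T g) _ _ qXY qXY' (pa_J h X Y p1X p1Y))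
                 (pa_J g (pa_T h X) (pa_T h Y) qX qY));
  (* cocycle condition, for X in C_{k^-1} /\ C_{k^-1 h^-1} /\ C_{k^-1 h^-1 g^-1};
     the two sides live in hom(T_g T_h T_k X, T_{(gh)k} X) and
     hom(T_g T_h T_k X, T_{g(hk)} X), identified via associativity of G *)
  pa_gamma_assoc : forall g h k (X : C)
      (pk : pa_I (ginv k) X)
      (pkh : pa_I (gmul (ginv k) (ginv h)) X)
      (pkhg : pa_I (gmul (gmul (ginv k) (ginv h)) (ginv g)) X)
      (a1 : pa_I (ginv k) X) (a2 : pa_I (gmul (ginv k) (ginv (gmul g h))) X)
      (b1 : pa_I (ginv h) (pa_T k X))
      (b2 : pa_I (gmul (ginv h) (ginv g)) (pa_T k X))
      (c1 : pa_I (ginv (gmul h k)) X)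
      (c2 : pa_I (gmul (ginv (gmul h k)) (ginv g)) X)
      (d1 : pa_I (ginv k) X) (d2 : pa_I (gmul (ginv k) (ginv h)) X)
      (e1 : pa_I (ginv g) (pa_T h (pa_T k X)))
      (e2 : pa_I (ginv g) (pa_T (gmul h k) X)),
      cmp (pa_gamma (gmul g h) k X a1 a2) (pa_gamma g h (pa_T k X) b1 b2)
      = @castT C G (fun a Z => pa_T a Z) _ _ _ _ (gmulA g h k)
          (cmp (pa_gamma g (gmul h k) X c1 c2)
               (@pf_hom C C _ (pa_T g) _ _ e1 e2 (pa_gamma h k X d1 d2)));
  (* unit conditions: for X in C_{g^-1}, u_{T_g X} and (gamma_{e,g})_X are
     mutually inverse, as are T_g(u_X) and (gamma_{g,e})_X (identifying
     T_{eg} = T_g = T_{ge} via the unit laws of G) *)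
  pa_u_gamma_l : forall g (X : C) (pX : pa_I (ginv g) X)
      (p1 : pa_I (ginv g) X) (p2 : pa_I (gmul (ginv g) (ginv gunit)) X),
      cmp (@castT C G (fun a Z => pa_T a Z) _ _ _ _ (gmul1l g) (pa_gamma gunit g X p1 p2)) (pa_u (pa_T g X))
        = idm (pa_T g X) /\
      cmp (pa_u (pa_T g X)) (@castT C G (fun a Z => pa_T a Z) _ _ _ _ (gmul1l g) (pa_gamma gunit g X p1 p2))
        = idm (pa_T gunit (pa_T g X));
  pa_u_gamma_r : forall g (X : C) (pX : pa_I (ginv g) X)
      (p1 : pa_I (ginv gunit) X) (p2 : pa_I (gmul (ginv gunit) (ginv g)) X)
      (q : pa_I (ginv g) X) (q' : pa_I (ginv g) (pa_T gunit X)),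
      cmp (@castT C G (fun a Z => pa_T a Z) _ _ _ _ (gmul1r g) (pa_gamma g gunit X p1 p2))
          (@pf_hom C C _ (pa_T g) _ _ q q' (pa_u X))
        = idm (pa_T g X) /\
      cmp (@pf_hom C C _ (pa_T g) _ _ q q' (pa_u X))
          (@castT C G (fun a Z => pa_T a Z) _ _ _ _ (gmul1r g) (pa_gamma g gunit X p1 p2))
        = idm (pa_T g (pa_T gunit X)) }.
Set Implicit Arguments.
Arguments pa_I {G C} p.
Arguments pa_T {G C} p.
Arguments pa_J {G C} p g X Y _ _.
Arguments pa_gamma {G C} p g h X _ _.
Arguments pa_u {G C} p X.

Unset Implicit Arguments.
Record SgFunctor (C D : SgCat) := {
  sf_ob :> C -> D;
  sf_hom : forall X Y : C, hom X Y -> hom (sf_ob X) (sf_ob Y);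
  sf_id : forall X : C, sf_hom X X (idm X) = idm (sf_ob X);
  sf_cmp : forall (X Y Z : C) (f : hom X Y) (g : hom Y Z),
      sf_hom X Z (cmp g f) = cmp (sf_hom Y Z g) (sf_hom X Y f);
  sf_J : forall X Y : C, hom (tens (sf_ob X) (sf_ob Y)) (sf_ob (tens X Y));
  sf_J_iso : forall X Y : C, is_iso (sf_J X Y);
  sf_J_nat : forall (X X' Y Y' : C) (f : hom X X') (g : hom Y Y'),
      cmp (sf_J X' Y') (tensm (sf_hom X X' f) (sf_hom Y Y' g))
      = cmp (sf_hom _ _ (tensm f g)) (sf_J X Y);
  sf_hexagon : forall X Y Z : C,
      cmp (sf_hom _ _ (assoc X Y Z))
          (cmp (sf_J (tens X Y) Z) (tensm (sf_J X Y) (idm (sf_ob Z))))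
      = cmp (sf_J X (tens Y Z))
          (cmp (tensm (idm (sf_ob X)) (sf_J Y Z))
               (assoc (sf_ob X) (sf_ob Y) (sf_ob Z))) }.
Arguments sf_ob {C D} s _.
Arguments sf_hom {C D} s {X Y} _.
Arguments sf_J {C D} s X Y.

Record PAMorphism (G : Group) (C C' : SgCat)
    (T : PartialAction G C) (T' : PartialAction G C') := {
  pm_F : SgFunctor C C';
  (* implicit in the definition: tau_g is a transformation between functors
     C_{g^-1} -> C'_g, so F must send C_{g^-1} into C'_{g^-1} *)
  pm_F_I : forall (g : G) (X : C), pa_I T g X -> pa_I T' g (pm_F X);
  pm_tau : forall (g : G) (X : C), pa_I T (ginv g) X ->
      hom (pm_F (pa_T T g X)) (pa_T T' g (pm_F X));
  pm_tau_iso : forall g X (pX : pa_I T (ginv g) X), is_iso (pm_tau g X pX);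
  pm_tau_nat : forall g (X Y : C) (f : hom X Y)
      (pX : pa_I T (ginv g) X) (pY : pa_I T (ginv g) Y)
      (qX : pa_I T' (ginv g) (pm_F X)) (qY : pa_I T' (ginv g) (pm_F Y)),
      cmp (pm_tau g Y pY) (sf_hom pm_F (pf_hom (pa_T T g) pX pY f))
      = cmp (pf_hom (pa_T T' g) qX qY (sf_hom pm_F f)) (pm_tau g X pX);
  pm_compat : forall (g h : G) (X : C)
      (pX1 : pa_I T (ginv h) X) (pX2 : pa_I T (ginv (gmul g h)) X)
      (c1 : pa_I T (ginv h) X) (c2 : pa_I T (gmul (ginv h) (ginv g)) X)
      (t1 : pa_I T (ginv (gmul g h)) X)
      (c1' : pa_I T' (ginv h) (pm_F X))
      (c2' : pa_I T' (gmul (ginv h) (ginv g)) (pm_F X))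
      (e1 : pa_I T' (ginv g) (pm_F (pa_T T h X)))
      (e2 : pa_I T' (ginv g) (pa_T T' h (pm_F X)))
      (t2 : pa_I T (ginv h) X)
      (t3 : pa_I T (ginv g) (pa_T T h X)),
      cmp (pm_tau (gmul g h) X t1) (sf_hom pm_F (pa_gamma T g h X c1 c2))
      = cmp (pa_gamma T' g h (pm_F X) c1' c2')
            (cmp (pf_hom (pa_T T' g) e1 e2 (pm_tau h X t2))
                 (pm_tau g (pa_T T h X) t3)) }.
Arguments PAMorphism {G C C'} T T'.
Arguments pm_F {G C C' T T'} p.
Arguments pm_tau {G C C' T T'} p g X _.
Set Implicit Arguments.

(* Put [phi := tau_e X o F(u_X)].  Specialising the compatibility of [tau]
   with [gamma] to [g = h = e], and using [gamma_{e,e} o T_e(u_X) = id] and the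
   naturality of [tau_e], gives [gamma'_{e,e} o T'_e(phi) o tau_e = tau_e].
   Cancelling the isomorphism [tau_e], both [T'_e(phi)] and [T'_e(u')] are right
   inverses of [gamma'_{e,e}], which also has the left inverse [u'_{T'_e}]; so
   they agree, and [T'_e] is faithful because it is isomorphic to the identity
   via [u']. *)

From Stdlib Require Import ProofIrrelevance.
Set Implicit Arguments.
Unset Strict Implicit.

Lemma iso_monic (C : Cat) (A B Z : C) (h : hom A B) (f g : hom Z A) :
  is_iso h -> cmp h f = cmp h g -> f = g.
Proof.
  intros [h' [Hh _]] Hfg.
  rewrite <- (cmp_idl f), <- (cmp_idl g), <- Hh, <- !cmp_assoc, Hfg.
  reflexivity.
Qed.

Lemma iso_epic (C : Cat) (A B Z : C) (h : hom A B) (f g : hom B Z) :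
  is_iso h -> cmp f h = cmp g h -> f = g.
Proof.
  intros [h' [_ Hh]] Hfg.
  rewrite <- (cmp_idr f), <- (cmp_idr g), <- Hh, !cmp_assoc, Hfg.
  reflexivity.
Qed.

Lemma right_inverse_unique (C : Cat) (A B : C) (a : hom A B) (l b c : hom B A) :
  cmp l a = idm A -> cmp a b = idm B -> cmp a c = idm B -> b = c.
Proof.
  intros Hl Hb Hc.
  rewrite <- (cmp_idl b), <- (cmp_idl c), <- Hl, <- !cmp_assoc, Hb, Hc.
  reflexivity.
Qed.

Lemma ginv1 (G : Group) : ginv (@gunit G) = gunit.
Proof. rewrite <- (gmul1r (ginv gunit)). apply gmulVl. Qed.

Section UnitGamma.

Variables (G : Group) (C : SgCat) (T : PartialAction G C).

Lemma pa_I_unit (g : G) (X : C) : g = gunit -> pa_I T g X.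
Proof. intros ->; apply pa_Ie. Qed.

Lemma pa_I_ginv1 (X : C) : pa_I T (ginv gunit) X.
Proof. apply pa_I_unit, ginv1. Qed.

Lemma pa_I_ginv1_mul (X : C) : pa_I T (gmul (ginv gunit) (ginv gunit)) X.
Proof. apply pa_I_unit; rewrite ginv1; apply gmul1l. Qed.

Definition unit_gamma (X : C) :
    hom (pa_T T gunit (pa_T T gunit X)) (pa_T T gunit X) :=
  @castT C G (fun a Z => pa_T T a Z) _ _ _ _ (gmul1l gunit)
    (pa_gamma T gunit gunit X (pa_I_ginv1 X) (pa_I_ginv1_mul X)).

Lemma unit_gamma_Tu (X : C) (p : pa_I T (ginv gunit) X)
    (q : pa_I T (ginv gunit) (pa_T T gunit X)) :
  cmp (unit_gamma X) (pf_hom (pa_T T gunit) p q (pa_u T X)) = idm _.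
Proof.
  unfold unit_gamma.
  rewrite (proof_irrelevance _ (gmul1l gunit) (gmul1r gunit)).
  apply (pa_u_gamma_r _ _ T gunit X p).
Qed.

Lemma u_unit_gamma (X : C) :
  cmp (pa_u T (pa_T T gunit X)) (unit_gamma X) = idm _.
Proof. apply (pa_u_gamma_l _ _ T gunit X (pa_I_ginv1 X)). Qed.

Lemma pf_hom_unit_inj (Y Z : C) (p : pa_I T (ginv gunit) Y)
    (q : pa_I T (ginv gunit) Z) (f g : hom Y Z) :
  pf_hom (pa_T T gunit) p q f = pf_hom (pa_T T gunit) p q g -> f = g.
Proof.
  intros Hfg. apply (iso_monic (pa_u_iso _ _ T Z)).
  rewrite !(pa_u_nat _ _ T _ _ p q), Hfg. reflexivity.
Qed.

Lemma pa_u_unique (X : C) (p : pa_I T (ginv gunit) X)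
    (q : pa_I T (ginv gunit) (pa_T T gunit X)) (phi : hom X (pa_T T gunit X)) :
  cmp (unit_gamma X) (pf_hom (pa_T T gunit) p q phi) = idm _ ->
  phi = pa_u T X.
Proof.
  intros Hphi. apply (pf_hom_unit_inj (p := p) (q := q)).
  apply (right_inverse_unique (u_unit_gamma X) Hphi).
  apply unit_gamma_Tu.
Qed.

End UnitGamma.

Section MorphismUnit.

Variables (G : Group) (C C' : SgCat).
Variables (T : PartialAction G C) (T' : PartialAction G C') (m : PAMorphism T T').

Lemma pm_tau_castT (X : C) (a b : G) (E : a = b) (Z : C) (Z' : C')
    (ta : pa_I T (ginv a) X) (tb : pa_I T (ginv b) X)
    (g : hom Z (pa_T T a X)) (g' : hom Z' (pa_T T' a (pm_F m X)))
    (W : hom (pm_F m Z) Z') :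
  cmp (pm_tau m a X ta) (sf_hom (pm_F m) g) = cmp g' W ->
  cmp (pm_tau m b X tb)
      (sf_hom (pm_F m) (@castT C G (fun a Z => pa_T T a Z) _ _ _ _ E g))
  = cmp (@castT C' G (fun a Z => pa_T T' a Z) _ _ _ _ E g') W.
Proof.
  subst b. unfold castT; simpl. rewrite (proof_irrelevance _ tb ta). auto.
Qed.

Lemma pm_tau_unit_gamma (X : C) (p : pa_I T (ginv gunit) X)
    (q : pa_I T (ginv gunit) (pa_T T gunit X))
    (r : pa_I T' (ginv gunit) (pm_F m (pa_T T gunit X)))
    (r' : pa_I T' (ginv gunit) (pa_T T' gunit (pm_F m X))) :
  cmp (pm_tau m gunit X p) (sf_hom (pm_F m) (unit_gamma T X))
  = cmp (unit_gamma T' (pm_F m X))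
        (cmp (pf_hom (pa_T T' gunit) r r' (pm_tau m gunit X p))
             (pm_tau m gunit (pa_T T gunit X) q)).
Proof.
  assert (t : pa_I T (ginv (gmul gunit gunit)) X)
    by (apply pa_I_unit; rewrite gmul1l; apply ginv1).
  apply pm_tau_castT with (ta := t).
  apply pm_compat; assumption.
Qed.

Lemma unit_gamma_tau_u (X : C) (p : pa_I T (ginv gunit) X)
    (r : pa_I T' (ginv gunit) (pm_F m X))
    (r' : pa_I T' (ginv gunit) (pa_T T' gunit (pm_F m X))) :
  cmp (cmp (unit_gamma T' (pm_F m X))
           (pf_hom (pa_T T' gunit) r r'
              (cmp (pm_tau m gunit X p) (sf_hom (pm_F m) (pa_u T X)))))
      (pm_tau m gunit X p)
  = pm_tau m gunit X p.
Proof.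
  pose proof (pa_I_ginv1 T (pa_T T gunit X)) as q.
  pose proof (pa_I_ginv1 T' (pm_F m (pa_T T gunit X))) as s.
  transitivity (cmp (pm_tau m gunit X p)
     (sf_hom (pm_F m) (cmp (unit_gamma T X) (pf_hom (pa_T T gunit) p q (pa_u T X))))).
  2:{ rewrite unit_gamma_Tu, sf_id, cmp_idr. reflexivity. }
  rewrite sf_cmp, cmp_assoc, (pm_tau_unit_gamma p q s r').
  rewrite <- !cmp_assoc, (pm_tau_nat _ _ _ _ _ m gunit _ _ (pa_u T X) p q r s).
  rewrite (pf_cmp (pa_T T' gunit) r s r'), !cmp_assoc.
  reflexivity.
Qed.

End MorphismUnit.

Theorem proposition3p9 (G : Group) (C C' : SgCat)
    (T : PartialAction G C) (T' : PartialAction G C')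
    (m : PAMorphism T T') (X : C) (pX : pa_I T (ginv gunit) X) :
  cmp (pm_tau m gunit X pX) (sf_hom (pm_F m) (pa_u T X))
  = pa_u T' (pm_F m X).
Proof.
  apply pa_u_unique with (p := pa_I_ginv1 T' _) (q := pa_I_ginv1 T' _).
  apply (iso_epic (pm_tau_iso _ _ _ _ _ m gunit X pX)).
  rewrite cmp_idl. apply unit_gamma_tau_u.
Qed.
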